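(* Let $n \ge 1$ and $t$ be integers with $1 \le t < \frac{n+1}{2}$. Then the colorless cross-blockchain transaction task $(\mathcal{I}, \mathcal{O}', \Xi)$ on $n+1$ blockchains, defined in the context, has no $t$-resilient protocol in the asynchronous message-passing model with crash failures.
   Context: Setting. There are $n+1$ distinct blockchains $C_0,\dots,C_n$. An $(n+1)$-party cross-blockchain transaction touches exactly one block $v_i$ on each blockchain $C_i$. Input complex $\mathcal{I}$. The vertices are the pairs $(v_i, a)$ with $0 \le i \le n$ and $a \in \{0,1,\bot\}$. Here $0$ means not committed, $1$ means committed, and $\bot$ means the block's branch was suspended by a fork. A nonempty set of vertices is a simplex if and only if its vertices involve pairwise distinct blocks. Colorless output complex $\mathcal{O}'$. Its vertices are the values $0$ (aborted) and $1$ (committed), and its only simplices are $\{0\}$ and $\{1\}$. Colorless carrier map $\Xi$. For a simplex $\sigma$ of $\mathcal{I}$: - $\Xi(\sigma)=\{1\}$ if all input values in $\sigma$ are $1$; - $\Xi(\sigma)=\{0\}$ if some input value in $\sigma$ is $\bot$; - $\Xi(\sigma)=\mathcal{O}'$ otherwise. Computational model. There are $n+1$ processes (one per blockchain) communicating by asynchronous message passing, and at most $t$ of them may fail by crashing. Process $i$ starts with an input vertex $(v_i, a_i)$ of $\mathcal{I}$. A protocol solves the colorless task if, for every execution with at most $t$ crashes, every non-crashed process eventually decides a value in $\{0,1\}$. Moreover, if $\sigma$ is the simplex of inputs of the participating processes, the set of decided values must be a simplex of $\Xi(\sigma)$; in particular all decided values must be equal. Such a protocol is called $t$-resilient. *)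

From mathcomp Require Import all_boot.
Set Implicit Arguments. Unset Strict Implicit. Unset Printing Implicit Defensive.

(* Input values: 0 = not committed, 1 = committed, bot = branch suspended by a fork. *)
Inductive inval := V0 | V1 | Vbot.

(* A step of process p: given its current state and possibly a received message
   (tagged with its sender), it moves to a new state and sends a finite list of
   messages (destination, payload).  [p_decide] gives the decided value, if any
   (false = 0 = aborted, true = 1 = committed). *)
Record protocol (n : nat) (Block : Type) := Protocol {
  State : Type;
  Msg : Type;
  p_init : 'I_n.+1 -> Block * inval -> State;
  p_step : 'I_n.+1 -> State -> option ('I_n.+1 * Msg) -> State * seq ('I_n.+1 * Msg);
  p_decide : State -> option bool }.

(* An infinite execution: at time k process [sched k] takes a step, receiving
   either nothing ([recv k = None]) or the message identified by (s, j): the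
   j-th message sent at step s.  [sent k] lists the messages sent at step k and
   [st k p] is the local state of p before step k. *)
Record execution (n : nat) (Block : Type) (P : protocol n Block) := Execution {
  sched : nat -> 'I_n.+1;
  recv : nat -> option (nat * nat);
  sent : nat -> seq ('I_n.+1 * Msg P);
  st : nat -> 'I_n.+1 -> State P }.

Section Model.
Variables (n : nat) (Block : Type) (P : protocol n Block).

Definition correct (E : execution P) (p : 'I_n.+1) : Prop :=
  forall T, exists k, (T <= k)%N /\ sched E k = p.

Definition participates (E : execution P) (p : 'I_n.+1) : Prop :=
  exists k, sched E k = p.

Definition delivered (E : execution P) (k : nat) (inm : option ('I_n.+1 * Msg P)) : Prop :=
  match recv E k with
  | None => inm = None
  | Some (s, j) => (s < k)%N /\
      exists m, onth (sent E s) j = Some (sched E k, m) /\ inm = Some (sched E s, m)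
  end.

Definition admissible (t : nat) (v : 'I_n.+1 -> Block) (a : 'I_n.+1 -> inval)
    (E : execution P) : Prop :=
  [/\ (forall p, st E 0 p = @p_init _ _ P p (v p, a p)),
      (forall k q, q != sched E k -> st E k.+1 q = st E k q),
      (forall k, exists inm, delivered E k inm /\
          @p_step _ _ P (sched E k) (st E k (sched E k)) inm = (st E k.+1 (sched E k), sent E k)),
      (forall k k' sj, recv E k = Some sj -> recv E k' = Some sj -> k = k') /\
      (forall s j d m, onth (sent E s) j = Some (d, m) -> correct E d ->
          exists k, recv E k = Some (s, j))
    & (exists F : {set 'I_n.+1}, #|F| <= t /\ forall p, p \notin F -> correct E p)].

Definition decides (E : execution P) (p : 'I_n.+1) (b : bool) : Prop :=
  exists k, @p_decide _ _ P (st E k p) = Some b.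

End Model.

Definition out_simplex (tau : {set bool}) : Prop :=
  tau = [set false] \/ tau = [set true].

(* Colorless carrier map Xi, on an input simplex sigma given as a set of input
   vertices; [Xi sigma tau] means tau is a simplex of Xi(sigma). *)
Definition Xi (Block : Type) (sigma : Block * inval -> Prop) (tau : {set bool}) : Prop :=
  let all1 := forall x, sigma x -> x.2 = V1 in
  let somebot := exists x, sigma x /\ x.2 = Vbot in
  (all1 /\ tau = [set true]) \/
  (somebot /\ tau = [set false]) \/
  (~ all1 /\ ~ somebot /\ out_simplex tau).

Definition part_inputs n (Block : Type) (P : protocol n Block) (E : execution P)
    (v : 'I_n.+1 -> Block) (a : 'I_n.+1 -> inval) : Block * inval -> Prop :=
  fun x => exists p, participates E p /\ x = (v p, a p).

Definition solves_t_resilient n (Block : Type) (P : protocol n Block) (t : nat)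
    (v : 'I_n.+1 -> Block) : Prop :=
  forall (a : 'I_n.+1 -> inval) (E : execution P), admissible t v a E ->
    (forall p, correct E p -> exists b, decides E p b) /\
    (exists tau, Xi (part_inputs E v a) tau /\
        forall p b, decides E p b -> b \in tau).

From mathcomp Require Import all_boot.
From Stdlib Require Cantor.
Set Implicit Arguments. Unset Strict Implicit. Unset Printing Implicit Defensive.

(* Give process ord0 the input bot and every other process the input 1.  Since
   t >= 1, ord0 may crash before its first step; all participating inputs are
   then 1, so a correct process p decides 1 at some time k.  Now let ord0 take a
   single step after time k and crash: p cannot tell the difference before it
   decides, yet bot now participates and forces the decision 0. *)

Section RoundRobin.
Variable n : nat.
Hypothesis n_gt0 : 0 < n.

Definition round_robin (i : nat) : 'I_n.+1 := inord (i %% n).+1.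

Lemma round_robin_val i : round_robin i = (i %% n).+1 :> nat.
Proof. by rewrite inordK // ltnS ltn_pmod. Qed.

Lemma round_robin_neq0 i : round_robin i != ord0.
Proof. by rewrite -val_eqE /= round_robin_val. Qed.

Lemma round_robin_onto N (d : 'I_n.+1) : d != ord0 -> exists2 i, N <= i & round_robin i = d.
Proof.
rewrite -val_eqE /= -lt0n => d_gt0.
exists (N * n + (val d).-1); first by rewrite (leq_trans (leq_pmulr N n_gt0)) ?leq_addr.
by apply: val_inj; rewrite /= round_robin_val modnMDl modn_small ?prednK // -ltnS.
Qed.

End RoundRobin.

Section Construction.
Variables (n : nat) (Block : Type) (P : protocol n Block).
Hypothesis n_gt0 : 0 < n.
Variables (init : 'I_n.+1 -> State P) (K : option nat).

Notation history := (seq ('I_n.+1 * seq ('I_n.+1 * Msg P))).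

Definition lookup (h : history) (sj : nat * nat) : option ('I_n.+1 * ('I_n.+1 * Msg P)) :=
  if onth h sj.1 is Some (src, out) then omap (pair src) (onth out sj.2) else None.

Definition receiver (h : history) (sj : nat * nat) : 'I_n.+1 :=
  if lookup h sj is Some (_, (d, _)) then d else ord0.

Definition incoming (h : history) (r : option (nat * nat)) : option ('I_n.+1 * Msg P) :=
  if r is Some sj then omap (fun x => (x.1, x.2.2)) (lookup h sj) else None.

(* The message (s, j) = Cantor.of_nat i is delivered at time 2i+1, unless it has
   not been sent yet or is addressed to ord0 ([receiver] returns ord0 in both
   cases); at time 2i the round robin over the other processes steps, except that
   ord0 takes its single step at time 2K. *)
Definition turn (k : nat) (h : history) : 'I_n.+1 * option (nat * nat) :=
  let sj := Cantor.of_nat k./2 in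
  if odd k && (receiver h sj != ord0) then (receiver h sj, Some sj)
  else (if ~~ odd k && (K == Some k./2) then ord0 else round_robin n k./2, None).

Record config := Config { cst : 'I_n.+1 -> State P; hist : history }.

Definition stepper k c := (turn k (hist c)).1.
Definition received k c := (turn k (hist c)).2.
Definition outcome k c :=
  p_step (stepper k c) (cst c (stepper k c)) (incoming (hist c) (received k c)).

Definition next k c : config :=
  Config (fun q => if q == stepper k c then (outcome k c).1 else cst c q)
         (rcons (hist c) (stepper k c, (outcome k c).2)).

Fixpoint cfg k : config := if k is k'.+1 then next k' (cfg k') else Config init [::].

Definition exec : execution P :=
  Execution (fun k => stepper k (cfg k)) (fun k => received k (cfg k))
            (fun k => (outcome k (cfg k)).2) (fun k => cst (cfg k)).

Lemma size_hist k : size (hist (cfg k)) = k.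
Proof. by elim: k => //= k IHk; rewrite size_rcons IHk. Qed.

Lemma onth_hist k s : s < k -> onth (hist (cfg k)) s = Some (sched exec s, sent exec s).
Proof.
elim: k => // k IHk; rewrite ltnS leq_eqVlt => /orP[/eqP->|lt_sk] /=.
  by rewrite -cats1 onth_cat size_hist ltnn subnn.
by rewrite -cats1 onth_cat size_hist lt_sk IHk.
Qed.

Lemma lookup_hist k s j : s < k ->
  lookup (hist (cfg k)) (s, j) = omap (pair (sched exec s)) (onth (sent exec s) j).
Proof. by move=> lt_sk; rewrite /lookup onth_hist. Qed.

Lemma received_time k c sj : received k c = Some sj -> k = (Cantor.to_nat sj).*2.+1.
Proof.
rewrite /received /turn; case: ifP => //= /andP[odd_k _] [<-].
by rewrite Cantor.cancel_to_of -[in LHS](odd_double_half k) odd_k.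
Qed.

Lemma stepper0 k c : stepper k c = ord0 -> K = Some k./2 /\ ~~ odd k.
Proof.
rewrite /stepper /turn; case: ifP => [/andP[_ /negPf r0] /= rk|_ /=].
  by rewrite rk eqxx in r0.
case: ifP => [/andP[ev /eqP->] //|_ rr0].
by move: (round_robin_neq0 n_gt0 k./2); rewrite rr0 eqxx.
Qed.

Lemma received_receiver k c sj : received k c = Some sj ->
  stepper k c = receiver (hist c) sj /\ receiver (hist c) sj != ord0.
Proof. by rewrite /received /stepper /turn; case: ifP => //= /andP[_ r0] [<-]. Qed.

Lemma cantor_fst_lt s j : s < (Cantor.to_nat (s, j)).*2.+1.
Proof.
have /leP le_s := Cantor.to_nat_non_decreasing s j.
by rewrite ltnS -addnn (leq_trans (leq_trans (leq_addl j s) le_s)) ?leq_addr.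
Qed.

Lemma exec_frame k q : q != sched exec k -> st exec k.+1 q = st exec k q.
Proof. by move=> /negPf /= ->. Qed.

Lemma exec_step k : exists inm, delivered exec k inm /\
  p_step (sched exec k) (st exec k (sched exec k)) inm =
    (st exec k.+1 (sched exec k), sent exec k).
Proof.
exists (incoming (hist (cfg k)) (received k (cfg k))); split; last first.
  by rewrite /= eqxx -surjective_pairing.
rewrite /delivered /=; case r_k: received => [[s j]|//].
have [-> r_neq0] := received_receiver r_k.
have lt_sk : s < k by rewrite (received_time r_k) cantor_fst_lt.
move: r_neq0; rewrite /receiver /incoming (lookup_hist j lt_sk) /=.
by case: onth => [[d m] _|]; [split; last exists m | rewrite eqxx].
Qed.

Lemma exec_recv_inj k k' sj : recv exec k = Some sj -> recv exec k' = Some sj -> k = k'.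
Proof. by move=> /received_time -> /received_time ->. Qed.

Lemma exec_correct d : d != ord0 -> correct exec d.
Proof.
move=> d_neq0 T.
have [i le_i rr_i] := round_robin_onto n_gt0 (maxn T (odflt 0 K).+1) d_neq0.
exists i.*2; split.
  by rewrite -addnn (leq_trans (leq_trans (leq_maxl _ _) le_i)) ?leq_addr.
rewrite /= /stepper /turn odd_double doubleK /= -rr_i; case: eqP => // K_i.
by move: le_i; rewrite K_i /= geq_max ltnn andbF.
Qed.

Lemma exec_correct_neq0 d : correct exec d -> d != ord0.
Proof.
move=> d_correct; apply/eqP => d0; have [k [le_k]] := d_correct (odflt 0 K).*2.+1.
rewrite /= d0 => /stepper0 [K_k even_k].
by move: le_k; rewrite K_k /= -{2}(odd_double_half k) (negPf even_k) ltnn.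
Qed.

Lemma exec_fair s j d m :
  onth (sent exec s) j = Some (d, m) -> correct exec d -> exists k, recv exec k = Some (s, j).
Proof.
move=> sent_sj /exec_correct_neq0 d_neq0.
have lt_s := cantor_fst_lt s j; have sj_x := Cantor.cancel_of_to (s, j).
set x := Cantor.to_nat (s, j) in lt_s sj_x *; exists x.*2.+1.
rewrite /= /received /turn oddS odd_double -uphalfE uphalf_double sj_x.
by rewrite /receiver (lookup_hist j lt_s) sent_sj /= d_neq0.
Qed.

Lemma exec_admissible t v a : (forall p, init p = p_init P p (v p, a p)) -> 0 < t ->
  admissible t v a exec.
Proof.
move=> init_va t_gt0; split=> //.
- exact: exec_frame.
- exact: exec_step.
- by split; [apply: exec_recv_inj | apply: exec_fair].
- by exists [set ord0]; rewrite cards1; split=> // p; rewrite in_set1; apply: exec_correct.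
Qed.

End Construction.

Lemma exec_sched_neq0 n Block (P : protocol n Block) (init : 'I_n.+1 -> State P) k :
  0 < n -> sched (exec init None) k != ord0.
Proof. by move=> n_gt0; apply/eqP => /(stepper0 n_gt0)[]. Qed.

Lemma exec_sched_crash n Block (P : protocol n Block) (init : 'I_n.+1 -> State P) i :
  sched (exec init (Some i)) i.*2 = ord0.
Proof. by rewrite /= /stepper /turn odd_double doubleK eqxx. Qed.

Lemma cfg_crash_prefix n Block (P : protocol n Block) (init : 'I_n.+1 -> State P) i k :
  k <= i.*2 -> cfg init (Some i) k = cfg init None k.
Proof.
elim: k => // k IHk lt_k.
have turn_eq : @turn _ _ P (Some i) k =1 turn None k.
  move=> h; rewrite /turn; case: (odd k) / boolP => //= even_k; case: eqP => // -[i_k].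
  by move: lt_k; rewrite -(odd_double_half k) (negPf even_k) -i_k ltnn.
change (next (Some i) k (cfg init (Some i) k) = next None k (cfg init None k)).
by rewrite IHk ?(ltnW lt_k) // /next /outcome /stepper /received !turn_eq.
Qed.

Lemma Xi_all1 (Block : Type) (sigma : Block * inval -> Prop) tau :
  (forall x, sigma x -> x.2 = V1) -> Xi sigma tau -> tau = [set true].
Proof.
move=> all1 [[_ ->] //|[[[x [/all1 x1 x_bot]] _]|[n_all1 _]]]; last by case: (n_all1 all1).
by rewrite x1 in x_bot.
Qed.

Lemma Xi_somebot (Block : Type) (sigma : Block * inval -> Prop) tau :
  (exists x, sigma x /\ x.2 = Vbot) -> Xi sigma tau -> tau = [set false].
Proof.
move=> somebot [[all1 _]|[[_ ->] //|[_ [n_somebot _]]]]; last by case: (n_somebot somebot).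
by case: somebot => x [/all1 ->].
Qed.

Theorem lemma2 (n t : nat) (Block : Type) (v : 'I_n.+1 -> Block) :
  injective v -> (1 <= n)%N -> (1 <= t)%N -> (t.*2 < n.+1)%N ->
  forall P : protocol n Block, ~ solves_t_resilient P t v.
Proof.
move=> _ n_gt0 t_gt0 _ P solves.
pose a (p : 'I_n.+1) := if p == ord0 then Vbot else V1.
pose E (K : option nat) := exec (fun p => p_init P p (v p, a p)) K.
have adm K : admissible t v a (E K) by apply: exec_admissible.
pose p1 : 'I_n.+1 := inord 1.
have p1_neq0 : p1 != ord0 by rewrite -val_eqE /= inordK.
have [p1_decides [tau0 [Xi0 dec0]]] := solves a _ (adm None).
have [b [k0 dec_k0]] := p1_decides p1 (exec_correct n_gt0 _ _ p1_neq0).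
have all1 x : part_inputs (E None) v a x -> x.2 = V1.
  by move=> [p [[k <-] ->]]; rewrite /a (negPf (exec_sched_neq0 _ _ n_gt0)).
have b_true : b = true.
  by have := dec0 p1 b (ex_intro _ k0 dec_k0); rewrite (Xi_all1 all1 Xi0) in_set1 => /eqP.
have [_ [tau1 [Xi1 dec1]]] := solves a _ (adm (Some k0)).
have somebot : exists x, part_inputs (E (Some k0)) v a x /\ x.2 = Vbot.
  exists (v ord0, a ord0); split; last by rewrite /a eqxx.
  by exists ord0; split=> //; exists k0.*2; apply: exec_sched_crash.
suff: true \in tau1 by rewrite (Xi_somebot somebot Xi1) in_set1.
by apply: (dec1 p1); exists k0; rewrite /= cfg_crash_prefix -?b_true // -addnn leq_addr.
Qed.
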